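(* Let $P$ be a 6-stack and let $Q\subseteq P$ be a subset which, with the induced order, is isomorphic to a tower of sections. If $j\ge 0$ is an integer with $\#Q(j)=3$, where $Q(j)$ denotes the set of elements of rank $j$ in the poset $Q$, then $Q(j)=P(i)$ for some integer $i\ge 0$.
   Context: All posets are finite. For a poset $P$ and $p\in P$, the rank $r(p)$ of $p$ is the largest $m$ such that there is a chain $p_0<\dots<p_m=p$ in $P$. $P$ is ranked of rank $r(P)$ if every maximal chain has exactly $r(P)+1$ elements. For $0\le i\le j$, $P(i,j)=\{p\in P:i\le r(p)\le j\}$, $P(i)=P(i,i)$ (induced order). The 6-crown $C_6$ is the poset on $\{x_0,x_1,x_2,y_0,y_1,y_2\}$ whose only strict comparabilities are $x_0<y_0>x_1<y_1>x_2<y_2>x_0$. A 6-stack is a ranked poset $P$ of rank $n\ge1$ such that $P(i,i+1)\cong C_6$ for each $0\le i<n$. The ordinal sum of posets $P_1,\dots,P_k$ ($k\ge1$) is their disjoint union ordered by the orders of the $P_i$ together with $p<q$ whenever $p\in P_i,q\in P_j,i<j$. A section is either a two-element antichain or a poset on the set $\{[i,k]: 0\le i\le 2,\ 0\le k\le n\}$ (with $3(n+1)$ distinct elements), for some $n\ge 1$, such that: (1) $[i,k]<[i,l]$ whenever $0\le k<l\le n$; (2) for each $k$, $\{[0,k],[1,k],[2,k]\}$ is an antichain; (3) $[i,k]<[j,l]$ implies $[i+1,k]<[j+1,l]$ (first indices mod $3$); (4) for each $0\le k<n$ there are $i,j$ with $[i,k]\not<[j,k+1]$. A tower of sections is an ordinal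 sum of one or more sections. *)

From mathcomp Require Import all_boot.
Set Implicit Arguments. Unset Strict Implicit. Unset Printing Implicit Defensive.

(* A finite poset is modelled as a finType T with a strict order lt : rel T
   (irreflexive and transitive).  Subsets carry the induced order. *)

Section Posets.
Variable T : finType.
Variable lt : rel T.

Definition strict_order : Prop := irreflexive lt /\ transitive lt.

Definition chainb (S : {set T}) (m : nat) (p : T) : bool :=
  [exists s : (m.+1).-tuple T,
     [&& all (fun x => x \in S) s, sorted lt s & tnth s ord_max == p]].

(* For a strict order a chain has at
   most #|T| elements, so taking the maximum over m <= #|T| is harmless. *)
Definition rank_in (S : {set T}) (p : T) : nat :=
  \max_(m < #|T|.+1 | chainb S m p) m.

Definition level (S : {set T}) (j : nat) : {set T} :=
  [set x in S | rank_in S x == j].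

Definition levels (S : {set T}) (i j : nat) : {set T} :=
  [set x in S | (i <= rank_in S x <= j)].

Definition is_chain (S C : {set T}) : bool :=
  (C \subset S) && [forall x in C, forall y in C, (x == y) || lt x y || lt y x].

Definition maximal_chain (S C : {set T}) : bool :=
  is_chain S C && [forall x in S, (x \notin C) ==> ~~ is_chain S (x |: C)].

Definition ranked_of_rank (S : {set T}) (n : nat) : Prop :=
  forall C : {set T}, maximal_chain S C -> #|C| = n.+1.

(* The 6-crown on 'I_6: x_k = k, y_k = 3 + k (k = 0,1,2);
   x0<y0>x1<y1>x2<y2>x0. *)
Definition c6lt (a b : 'I_6) : bool :=
  ((val a, val b) \in [:: (0,3); (1,3); (1,4); (2,4); (2,5); (0,5)]).

Definition iso_C6 (B : {set T}) : Prop :=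
  exists f : 'I_6 -> T, [/\ injective f, B = [set f a | a in 'I_6] &
    forall a b, lt (f a) (f b) = c6lt a b].

Definition six_stack (S : {set T}) : Prop :=
  exists n, [/\ 1 <= n, ranked_of_rank S n &
    forall i, i < n -> iso_C6 (levels S i i.+1)].

Definition antichain (B : {set T}) : bool :=
  [forall x in B, forall y in B, ~~ lt x y].

Definition is_section (B : {set T}) : Prop :=
  (#|B| = 2 /\ antichain B) \/
  exists n, exists f : 'I_3 * 'I_n.+1 -> T,
    [/\ 1 <= n, injective f & B = [set f x | x in predT]] /\
    [/\ (forall (i : 'I_3) (k l : 'I_n.+1), k < l -> lt (f (i, k)) (f (i, l))),
         (forall (i j : 'I_3) (k : 'I_n.+1), ~~ lt (f (i, k)) (f (j, k))),
     (forall (i j : 'I_3) (k l : 'I_n.+1),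
                  lt (f (i, k)) (f (j, l)) -> lt (f (ordS i, k)) (f (ordS j, l))) &
     (forall k, k < n -> exists i j : 'I_3,
                  ~~ lt (f (i, inord k)) (f (j, inord k.+1)))].

(* (Q, induced order) is isomorphic to an ordinal sum of K >= 1 sections:
   Q is split into blocks b^-1(0), ..., b^-1(K-1), each a section, and
   elements of different blocks are ordered exactly by block index. *)
Definition tower_of_sections (Q : {set T}) : Prop :=
  exists (K : nat) (b : T -> nat),
    [/\ 1 <= K,
        forall x, x \in Q -> b x < K,
        forall i, i < K -> is_section [set x in Q | b x == i] &
        forall x y, x \in Q -> y \in Q -> b x != b y -> lt x y = (b x < b y)].

End Posets.

From mathcomp Require Import all_boot zify.
Set Implicit Arguments. Unset Strict Implicit. Unset Printing Implicit Defensive.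

(* In a 6-stack, elements whose ranks differ by at least two are comparable:
   an element of rank i lies below two of the three elements of rank i+1 and
   an element of rank i+2 lies above two of them, so they share one.  Hence
   the three pairwise incomparable elements of Q(j) have ranks in a window
   {i, i+1} with i < n, i.e. they lie in one crown P(i,i+1) = C_6, whose only
   3-element antichains are its two levels. *)

Section Ranks.
Variables (T : finType) (lt : rel T).
Hypotheses (ltxx : irreflexive lt) (lt_trans : transitive lt).

Lemma chainbP (S : {set T}) m p :
  reflect (exists s : seq T,
             [/\ size s = m, all [in S] (rcons s p) & sorted lt (rcons s p)])
          (chainb lt S m p).
Proof.
apply: (iffP existsP) => [[t /and3P[]] | [s [size_s S_s sorted_s]]].
  rewrite (tnth_nth p); case: t => /= r; case/lastP: r => [//|s x].
  rewrite size_rcons eqSS => /eqP size_s S_s sorted_s.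
  by rewrite nth_rcons size_s ltnn eqxx => /eqP x_p; exists s; rewrite -x_p.
have size_sp : size (rcons s p) == m.+1 by rewrite size_rcons size_s.
exists (Tuple size_sp); apply/and3P; split => //.
by rewrite (tnth_nth p) /= nth_rcons size_s ltnn eqxx.
Qed.

Lemma chainb_card (S : {set T}) m p : chainb lt S m p -> m < #|T|.+1.
Proof.
case/chainbP=> s [size_s _ sorted_s].
have := max_card (mem (rcons s p)).
rewrite (card_uniqP (sorted_uniq lt_trans ltxx sorted_s)) size_rcons size_s.
by rewrite ltnS => /ltnW.
Qed.

Lemma rank_in_max (S : {set T}) m p : chainb lt S m p -> m <= rank_in lt S p.
Proof.
move=> chain_m.
exact: (@leq_bigmax_cond _ (fun k : 'I_#|T|.+1 => chainb lt S k p) val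
          (Ordinal (chainb_card chain_m)) chain_m).
Qed.

Lemma chainb_rank_in (S : {set T}) p : p \in S -> chainb lt S (rank_in lt S p) p.
Proof.
have chain0 : p \in S -> chainb lt S 0 p.
  by move=> Sp; apply/chainbP; exists [::]; rewrite /= Sp.
move=> Sp; rewrite /rank_in (bigmax_eq_arg ord0) ?chain0 //.
by case: arg_maxnP; rewrite ?chain0.
Qed.

Lemma rank_in_lt (S : {set T}) u v :
  u \in S -> v \in S -> lt u v -> rank_in lt S u < rank_in lt S v.
Proof.
move=> Su Sv lt_uv; apply: rank_in_max.
have /chainbP [s [size_s S_s sorted_s]] := chainb_rank_in Su.
apply/chainbP; exists (rcons s u); split.
- by rewrite size_rcons size_s.
- by rewrite all_rcons Sv S_s.
- by rewrite -cats1 cat_rcons sorted_cat_cons sorted_s /= lt_uv.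
Qed.

Lemma antichainP (A : {set T}) :
  reflect {in A &, forall x y, ~~ lt x y} (antichain lt A).
Proof.
apply: (iffP forall_inP) => [anti x y Ax Ay | anti x Ax].
  by move/forall_inP: (anti x Ax); apply.
by apply/forall_inP => y Ay; apply: anti.
Qed.

Lemma antichain_level (S : {set T}) j : antichain lt (level lt S j).
Proof.
apply/forall_inP => x; rewrite inE => /andP[Sx /eqP rx].
apply/forall_inP => y; rewrite inE => /andP[Sy /eqP ry].
by apply/negP => /(rank_in_lt Sx Sy); rewrite rx ry ltnn.
Qed.

Lemma sorted_is_chain (S : {set T}) s :
  all [in S] s -> sorted lt s -> is_chain lt S [set x in s].
Proof.
move=> S_s sorted_s; apply/andP; split.
  by apply/subsetP => x; rewrite inE => /(allP S_s).
apply/forall_inP => x; rewrite inE => s_x; apply/forall_inP => y; rewrite inE => s_y.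
have lt_nth := sorted_ltn_nth lt_trans x sorted_s.
have ix : index x s < size s by rewrite index_mem.
have iy : index y s < size s by rewrite index_mem.
case: (ltngtP (index x s) (index y s)) => [ixy|iyx|ixy].
- by have := lt_nth _ _ ix iy ixy; rewrite !nth_index // => ->; rewrite orbT.
- by have := lt_nth _ _ iy ix iyx; rewrite !nth_index // => ->; rewrite !orbT.
- by have := congr1 (nth x s) ixy; rewrite !nth_index // => ->; rewrite eqxx.
Qed.

(* A longest chain ending at p extends to a maximal chain, which has n+1 elements. *)
Lemma rank_in_ranked (S : {set T}) n p :
  ranked_of_rank lt S n -> p \in S -> rank_in lt S p <= n.
Proof.
move=> rankedS Sp.
have /chainbP [s [size_s S_s sorted_s]] := chainb_rank_in Sp.
have [C /maxsetP [chainC maxC] sub_C] :=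
  maxset_exists (sorted_is_chain S_s sorted_s).
have /rankedS card_C : maximal_chain lt S C.
  apply/andP; split=> //; apply/forall_inP => x _; apply/implyP => C'x.
  apply/negP => /maxC /(_ (subsetUr _ _)) C_eq.
  by move: C'x; rewrite -C_eq setU11.
have := subset_leq_card sub_C.
rewrite card_C cardsE (card_uniqP (sorted_uniq lt_trans ltxx sorted_s)).
by rewrite size_rcons size_s.
Qed.

End Ranks.

Lemma c6lt_sides (a b : 'I_6) : c6lt a b -> (a <= 2) && (2 < b).
Proof.
by move: a b => [[|[|[|[|[|[|?]]]]]] ?] // [[|[|[|[|[|[|?]]]]]] ?].
Qed.

Lemma card_c6lt_up (a : 'I_6) : a <= 2 -> #|[set b | c6lt a b]| = 2.
Proof.
rewrite cardsE cardE /enum_mem -enumT !enum_ordSl enum_ord0.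
by case: a => [[|[|[|[|[|[|]]]]]] ?].
Qed.

Lemma card_c6lt_down (b : 'I_6) : 2 < b -> #|[set a | c6lt a b]| = 2.
Proof.
rewrite cardsE cardE /enum_mem -enumT !enum_ordSl enum_ord0.
by case: b => [[|[|[|[|[|[|]]]]]] ?].
Qed.

Lemma card_c6_side (s : bool) : #|[set a : 'I_6 | (2 < a) == s]| = 3.
Proof. by rewrite cardsE cardE /enum_mem -enumT !enum_ordSl enum_ord0; case: s. Qed.

Lemma c6_incomparable_third (a b c : 'I_6) :
  (2 < a) != (2 < b) -> ~~ c6lt a b -> ~~ c6lt b a -> c != a -> c != b ->
  [|| c6lt a c, c6lt c a, c6lt b c | c6lt c b].
Proof.
by move: a b c => [[|[|[|[|[|[|?]]]]]] ?] // [[|[|[|[|[|[|?]]]]]] ?] //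
  [[|[|[|[|[|[|?]]]]]] ?].
Qed.

Lemma c6_antichain3 (P : {set 'I_6}) :
  #|P| = 3 -> {in P &, forall a b, ~~ c6lt a b} ->
  exists s : bool, P = [set a : 'I_6 | (2 < a) == s].
Proof.
move=> card_P antiP.
have [a Pa] : {a | a \in P} by apply/sigW/set0Pn; rewrite -card_gt0 card_P.
suff same_side : {in P, forall b : 'I_6, (2 < b) = (2 < a)}.
  exists (2 < a); apply/eqP; rewrite eqEcard card_P.
  apply/andP; split; last by rewrite card_c6_side.
  by apply/subsetP => b Pb; rewrite inE same_side.
move=> b Pb; have [->//|side_ab] := eqVneq (2 < b) (2 < a).
have [c] : exists c, c \in P :\: [set a; b].
  apply/set0Pn; rewrite -card_gt0 -(ltn_add2l #|P :&: [set a; b]|) cardsID addn0.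
  apply: leq_ltn_trans (subset_leq_card (subsetIr _ _)) _.
  by rewrite cards2 card_P; case: (_ != _).
rewrite !inE negb_or => /andP[/andP[ca cb] Pc].
have := c6_incomparable_third side_ab (antiP _ _ Pb Pa) (antiP _ _ Pa Pb) cb ca.
by rewrite (negbTE (antiP b c Pb Pc)) (negbTE (antiP c b Pc Pb))
  (negbTE (antiP a c Pa Pc)) (negbTE (antiP c a Pc Pa)).
Qed.

Section Crown.
Variables (T : finType) (lt : rel T) (i : nat) (f : 'I_6 -> T).
Hypotheses (ltxx : irreflexive lt) (lt_trans : transitive lt).
Hypothesis levels_f : levels lt [set: T] i i.+1 = [set f a | a in 'I_6].
Hypothesis lt_f : forall a b, lt (f a) (f b) = c6lt a b.
Local Notation r := (rank_in lt [set: T]).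

Lemma crown_rank a : r (f a) = i + (2 < a).
Proof.
have window b : i <= r (f b) <= i.+1.
  have : f b \in levels lt [set: T] i i.+1 by rewrite levels_f imset_f.
  by rewrite inE => /andP[].
have lt_rank b c : c6lt b c -> r (f b) < r (f c).
  by rewrite -lt_f; apply: rank_in_lt; rewrite ?inE.
have := window a; case: ltnP => [a_hi | a_lo] /= window_a.
- have /set0Pn[b] : [set b | c6lt b a] != set0.
    by rewrite -card_gt0 card_c6lt_down.
  by rewrite inE => /lt_rank; have := window b; lia.
- have /set0Pn[b] : [set b | c6lt a b] != set0.
    by rewrite -card_gt0 card_c6lt_up.
  by rewrite inE => /lt_rank; have := window b; lia.
Qed.

Lemma crown_level (s : bool) :
  level lt [set: T] (i + s) = f @: [set a : 'I_6 | (2 < a) == s].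
Proof.
apply/setP => x; rewrite inE in_setT /=; apply/eqP/imsetP => [rx | [a]].
  have : x \in levels lt [set: T] i i.+1.
    by rewrite inE in_setT rx leq_addr -addn1 leq_add2l leq_b1.
  rewrite levels_f => /imsetP[a _ x_a]; exists a => //; rewrite inE.
  by move: rx; rewrite x_a crown_rank => /addnI; case: (2 < a); case: s.
by rewrite inE => /eqP <- ->; apply: crown_rank.
Qed.

End Crown.

Section SixStack.
Variables (T : finType) (lt : rel T) (n : nat).
Hypotheses (ltxx : irreflexive lt) (lt_trans : transitive lt).
Hypotheses (n_gt0 : 0 < n) (ranked : ranked_of_rank lt [set: T] n).
Hypothesis crowns : forall i, i < n -> iso_C6 lt (levels lt [set: T] i i.+1).
Local Notation r := (rank_in lt [set: T]).
Local Notation L := (level lt [set: T]).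

Lemma rank_le_n p : r p <= n.
Proof. by rewrite (rank_in_ranked ltxx lt_trans ranked) ?in_setT. Qed.

Lemma card_level_succ i : i < n -> #|L i.+1| <= 3.
Proof.
case/crowns=> f [_ levels_f lt_f].
rewrite -addn1 (crown_level ltxx lt_trans levels_f lt_f true).
by rewrite (leq_trans (leq_imset_card _ _)) ?card_c6_side.
Qed.

Lemma up_degree i u : i < n -> r u = i -> 1 < #|[set w in L i.+1 | lt u w]|.
Proof.
case/crowns=> f [f_inj levels_f lt_f] ru.
have levelE := crown_level ltxx lt_trans levels_f lt_f.
have : u \in L (i + false) by rewrite addn0 inE in_setT ru /=.
rewrite (levelE false) => /imsetP[a].
rewrite inE => /eqP/negbT; rewrite -leqNgt => a_lo ->.
rewrite -(card_c6lt_up a_lo) -(card_imset [set b | c6lt a b] f_inj).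
apply/subset_leq_card/subsetP => w /imsetP[b]; rewrite inE => ab ->.
have /andP[_ b_hi] := c6lt_sides ab.
by rewrite inE lt_f ab andbT -(addn1 i) (levelE true) imset_f // inE b_hi.
Qed.

Lemma down_degree i v : i < n -> r v = i.+1 -> 1 < #|[set w in L i | lt w v]|.
Proof.
case/crowns=> f [f_inj levels_f lt_f] rv.
have levelE := crown_level ltxx lt_trans levels_f lt_f.
have : v \in L (i + true) by rewrite addn1 inE in_setT rv /=.
rewrite (levelE true) => /imsetP[b]; rewrite inE => /eqP b_hi ->.
rewrite -(card_c6lt_down b_hi) -(card_imset [set a | c6lt a b] f_inj).
apply/subset_leq_card/subsetP => w /imsetP[a]; rewrite inE => ab ->.
have /andP[a_lo _] := c6lt_sides ab.
by rewrite inE lt_f ab andbT -(addn0 i) (levelE false) imset_f // inE ltnNge a_lo.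
Qed.

(* Pigeonhole: two of the three elements of rank i+1 lie above u and two lie below v. *)
Lemma lt_rank_add2 i u v : i.+1 < n -> r u = i -> r v = i.+2 -> lt u v.
Proof.
move=> i1_lt_n ru rv.
have up := up_degree (ltnW i1_lt_n) ru.
have down := down_degree i1_lt_n rv.
have card_L := card_level_succ (ltnW i1_lt_n).
set U := [set w in L i.+1 | lt u w] in up *.
set D := [set w in L i.+1 | lt w v] in down *.
have card_UD : #|U :|: D| <= 3.
  apply: leq_trans card_L; apply: subset_leq_card; rewrite subUset.
  by apply/andP; split; apply/subsetP => w; rewrite inE => /andP[].
have /set0Pn[w] : U :&: D != set0.
  by rewrite -card_gt0; move: card_UD; rewrite cardsU; lia.
by rewrite !inE => /andP[/andP[_ uw] /andP[_ wv]]; apply: lt_trans uw wv.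
Qed.

Lemma lt_rank_gap u v : r u + 2 <= r v -> lt u v.
Proof.
suff gap_lt k w : r w = r u + 2 + k -> lt u w.
  by move=> gap; apply: (gap_lt (r v - (r u + 2))); lia.
elim: k w => [|k IH] w rw.
  by apply: (lt_rank_add2 (i := r u)) => //; have := rank_le_n w; lia.
have rw_le := rank_le_n w.
have /set0Pn[x] : [set x in L (r w).-1 | lt x w] != set0.
  by rewrite -card_gt0 (ltn_trans _ (down_degree (i := (r w).-1) _ _)) //; lia.
rewrite !inE => /andP[/eqP rx xw].
by apply: lt_trans xw; apply: IH; lia.
Qed.

Lemma rank_incomparable x y : ~~ lt x y -> r y <= r x + 1.
Proof.
by move=> nlt; rewrite leqNgt; apply: contra nlt => gap; apply: lt_rank_gap; lia.
Qed.

Lemma antichain_window A :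
  antichain lt A -> A != set0 -> exists2 i, i < n & {in A, forall w, i <= r w <= i.+1}.
Proof.
move=> /antichainP antiA /set0Pn[x0 Ax0].
have [m Am min_m] := @arg_minnP _ x0 [in A] r Ax0.
exists (minn (r m) n.-1); first lia.
move=> w Aw; have := min_m w Aw; have := rank_incomparable (antiA _ _ Am Aw).
have := rank_le_n w; lia.
Qed.

Lemma antichain3_level A : antichain lt A -> #|A| = 3 -> exists i, A = L i.
Proof.
move=> antiA card_A.
have [i i_lt_n window] : exists2 i, i < n & {in A, forall w, i <= r w <= i.+1}.
  by apply: antichain_window; rewrite // -card_gt0 card_A.
have [f [f_inj levels_f lt_f]] := crowns i_lt_n.
have A_eq : A = f @: (f @^-1: A).
  apply/eqP; rewrite eqEsubset; apply/andP; split; apply/subsetP => w.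
    move=> Aw; have : w \in levels lt [set: T] i i.+1 by rewrite inE in_setT window.
    by rewrite levels_f => /imsetP[a _ w_a]; rewrite w_a imset_f // inE -w_a.
  by case/imsetP=> a; rewrite inE => Afa ->.
have [s preim_eq] : exists s : bool, f @^-1: A = [set a : 'I_6 | (2 < a) == s].
  apply: c6_antichain3; first by rewrite -(card_imset _ f_inj) -A_eq.
  by move=> a b; rewrite !inE -lt_f; apply: (antichainP _ _ antiA).
by exists (i + s); rewrite A_eq preim_eq (crown_level ltxx lt_trans levels_f lt_f).
Qed.

End SixStack.

(* Only the fact that Q(j) is a 3-element antichain is used, not the tower
   structure of Q. *)
Theorem lemma5p1 (T : finType) (lt : rel T) (Q : {set T}) (j : nat) :
  strict_order lt ->
  six_stack lt [set: T] ->
  tower_of_sections lt Q ->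
  #|level lt Q j| = 3 ->
  exists i : nat, level lt Q j = level lt [set: T] i.
Proof.
move=> [ltxx lt_trans] [n [n_gt0 ranked crowns]] _.
apply: (antichain3_level ltxx lt_trans n_gt0 ranked crowns).
exact: antichain_level.
Qed.
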